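(* Let $\mathcal{A}=\{\alpha_1<\dots<\alpha_m\}\subset(0,1)$, $|\mathcal{A}|=m$. Let $(b_t)$ be base forecasts with $b_t\in\mathcal{K}$ and $(y_t)$ real outcomes with $|y_t-b_t^{\alpha}|\le R$ for all $\alpha\in\mathcal{A}$ and all $t$. Let $\ell_t(\theta)=\rho_{\mathcal{A}}(b_t+\theta,y_t)$. Let $\theta_1,\dots,\theta_T$ be the played offsets of MultiQT with constant delay $D\ge0$ and learning rate $\eta>0$ started from $\tilde\theta_1=\mathbf{0}$, and let $\mathcal{C}=\bigcap_{t=1}^{T+D+1}(\mathcal{K}-b_t)$. Then for every $\theta\in\mathcal{C}$, $$\mathrm{Regret}_T(\theta):=\frac1T\sum_{t=1}^T\ell_t(\theta_t)-\frac1T\sum_{t=1}^T\ell_t(\theta)\le\frac{R^2|\mathcal{A}|}{2\eta T}+2\eta|\mathcal{A}|(D+1).$$ In particular, for $\eta=\frac R2\sqrt{\frac{1}{(D+1)T}}$, $\mathrm{Regret}_T(\theta)\le\frac{2R|\mathcal{A}|\sqrt{D+1}}{\sqrt T}$.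
   Context: $\mathcal{K}=\{x\in\mathbb{R}^m:x_1\le\dots\le x_m\}$; $\Pi_C$ is Euclidean projection; $C-v=\{x-v:x\in C\}$. Quantile loss: $\rho_\alpha(\hat y,y)=\alpha|y-\hat y|$ if $y-\hat y\ge0$ and $(1-\alpha)|y-\hat y|$ otherwise; $\rho_{\mathcal{A}}(q,y)=\sum_{\alpha\in\mathcal{A}}\rho_\alpha(q^{\alpha},y)$. MultiQT with constant delay $D\ge0$: for $t=1,2,\dots$, $\theta_t=\Pi_{\mathcal{K}-b_t}(\tilde\theta_t)$, forecast $q_t=b_t+\theta_t$, $\mathrm{cov}_t^{\alpha}=\mathbb{1}\{y_t\le q_t^{\alpha}\}$, and $\tilde\theta_{t+1}^{\alpha}=\tilde\theta_t^{\alpha}-\eta(\mathrm{cov}_{t-D}^{\alpha}-\alpha)$ for $t>D$, $\tilde\theta_{t+1}=\tilde\theta_t$ for $t\le D$. *)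

(* R : rcfType (real closed field; needed for Num.sqrt). *)
From HB Require Import structures.
From mathcomp Require Import all_boot all_order all_algebra.
Set Implicit Arguments. Unset Strict Implicit. Unset Printing Implicit Defensive.
Import Order.TTheory GRing.Theory Num.Theory.
Local Open Scope ring_scope.

Definition in_K (R : rcfType) (m : nat) (x : 'I_m -> R) : Prop :=
  forall i j : 'I_m, (i <= j)%N -> x i <= x j.

(* x \in K - v  <->  x + v \in K *)
Definition in_K_shift (R : rcfType) (m : nat) (v x : 'I_m -> R) : Prop :=
  in_K (fun i => x i + v i).

Definition sqdist (R : rcfType) (m : nat) (x z : 'I_m -> R) : R :=
  \sum_(i < m) (x i - z i) ^+ 2.

Definition is_proj (R : rcfType) (m : nat) (C : ('I_m -> R) -> Prop)
  (x p : 'I_m -> R) : Prop :=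
  C p /\ forall z, C z -> sqdist x p <= sqdist x z.

Definition rho (R : rcfType) (alpha yhat y : R) : R :=
  if 0 <= y - yhat then alpha * `|y - yhat| else (1 - alpha) * `|y - yhat|.

Definition rhoA (R : rcfType) (m : nat) (alpha : 'I_m -> R) (q : 'I_m -> R) (y : R) : R :=
  \sum_(i < m) rho (alpha i) (q i) y.

Definition cov (R : rcfType) (m : nat) (y : nat -> R) (b theta : nat -> 'I_m -> R)
  (t : nat) (i : 'I_m) : R := if y t <= b t i + theta t i then 1 else 0.

(* MultiQT with constant delay D, learning rate eta, from tilde-theta_1 = 0.
   Time indices start at 1; index 0 is unused. *)
Definition multiQT (R : rcfType) (m : nat) (alpha : 'I_m -> R)
  (b : nat -> 'I_m -> R) (y : nat -> R) (D : nat) (eta : R)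
  (thetat theta : nat -> 'I_m -> R) : Prop :=
  (forall i, thetat 1%N i = 0) /\
  (forall t, (1 <= t)%N -> is_proj (in_K_shift (b t)) (thetat t) (theta t)) /\
  (forall t, (1 <= t)%N -> (t <= D)%N -> forall i, thetat t.+1 i = thetat t i) /\
  (forall t, (D < t)%N -> forall i,
      thetat t.+1 i = thetat t i
        - eta * (cov y b theta (t - D)%N i - alpha i)).

Definition regret (R : rcfType) (m : nat) (alpha : 'I_m -> R)
  (b : nat -> 'I_m -> R) (y : nat -> R) (T : nat)
  (theta : nat -> 'I_m -> R) (th : 'I_m -> R) : R :=
  T%:R^-1 * (\sum_(1 <= t < T.+1) rhoA alpha (fun i => b t i + theta t i) (y t))
  - T%:R^-1 * (\sum_(1 <= t < T.+1) rhoA alpha (fun i => b t i + th i) (y t)).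

From HB Require Import structures.
From mathcomp Require Import all_boot all_order all_algebra.
From mathcomp Require Import lra ring zify.
Import Order.TTheory GRing.Theory Num.Theory.
Set Implicit Arguments. Unset Strict Implicit. Unset Printing Implicit Defensive.
Local Open Scope ring_scope.

(* MultiQT is lazy projected gradient descent on the linearised quantile loss:
   unrolling the update, the unprojected iterate is minus eta times the sum of
   the gradients cov - alpha received so far, each D steps late.  Projecting onto
   the cone K - b_t never increases the linearised loss, since both alpha and
   minus the indicator of the upper set {q >= y_t} are feasible directions at the
   projection and the gradient is their difference.  Hence the regret is at most
   that of unconstrained dual averaging on linear losses with gradients in
   [-1, 1], which a completed square bounds by c^2/(2 eta) + eta T/2, plus
   eta D T for the delay.  The comparator need not lie in C: clipping each of its
   coordinates to [-R, R] only lowers its loss and gives c^2 <= R^2. *)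

Section QuantileLoss.
Variable R : rcfType.
Implicit Types a q z y c x r : R.

Lemma rhoE a q y :
  rho a q y = if q <= y then a * (y - q) else (1 - a) * (q - y).
Proof.
rewrite /rho subr_ge0; case: ifP => [qy | /negbT]; first by rewrite ger0_norm ?subr_ge0.
by rewrite -ltNge => yq; rewrite ltr0_norm ?subr_lt0 // opprB.
Qed.

Lemma rho_subgrad a q z y : 0 <= a <= 1 ->
  rho a q y - rho a z y <= ((if y <= q then 1 else 0) - a) * (q - z).
Proof.
move=> /andP[a0 a1]; rewrite !rhoE.
by case: (lerP q y); case: (lerP z y); case: (lerP y q); nra.
Qed.

Definition clip r x := if x < - r then - r else if r < x then r else x.

Lemma norm_clip_le r x : 0 <= r -> `|clip r x| <= r.
Proof.
move=> r0; rewrite ler_norml /clip.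
by case: ltrP => ?; [|case: ltrP => ?]; lra.
Qed.

Lemma rho_clip_le a y c x r : 0 <= a <= 1 -> `|y - c| <= r ->
  rho a (c + clip r x) y <= rho a (c + x) y.
Proof.
move=> /andP[a0 a1]; rewrite ler_norml /clip => /andP[yc1 yc2].
case: ltrP => x1; [|case: ltrP => x2 //]; rewrite !rhoE.
- have -> : c + - r <= y by lra.
  have -> : c + x <= y by lra.
  have : 0 <= a * (- r - x) by apply: mulr_ge0; lra.
  lra.
- have -> : (c + x <= y) = false by apply/negbTE; rewrite -ltNge; lra.
  have ? : 0 <= (1 - a) * (x - r) by apply: mulr_ge0; lra.
  have ? : 0 <= a * (c + r - y) by apply: mulr_ge0; lra.
  have ? : 0 <= (1 - a) * (c + x - y) by apply: mulr_ge0; lra.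
  by case: ifP => _; lra.
Qed.

End QuantileLoss.

Lemma le0_of_small_steps (R : realFieldType) (A B : R) : 0 <= B ->
  (forall e, 0 < e <= 1 -> 2 * e * A <= e ^+ 2 * B) -> A <= 0.
Proof.
move=> B0 steps; rewrite leNgt; apply/negP => A0.
have AB0 : 0 < A + B by lra.
set e := A / (A + B).
have eAB : e * (A + B) = A by rewrite mulfVK // gt_eqF.
have e0 : 0 < e by rewrite divr_gt0.
have e1 : e <= 1 by rewrite ler_pdivrMr // mul1r; lra.
have : 2 * e * A <= e ^+ 2 * B by apply: steps; rewrite e0.
nra.
Qed.

Section Projection.
Variables (R : rcfType) (m : nat).
Implicit Types (x p w bb alpha : 'I_m -> R).

Lemma sqdist_step x p w (e : R) :
  sqdist x (fun i => p i + e * w i)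
  = sqdist x p - 2 * e * \sum_i (x i - p i) * w i + e ^+ 2 * \sum_i w i ^+ 2.
Proof.
rewrite /sqdist !mulr_sumr -sumrB -big_split /=.
by apply: eq_bigr => i _; ring.
Qed.

Lemma is_proj_dir_le0 (C : ('I_m -> R) -> Prop) x p w : is_proj C x p ->
  (forall e, 0 < e <= 1 -> C (fun i => p i + e * w i)) ->
  \sum_i (x i - p i) * w i <= 0.
Proof.
move=> [_ pmin] Cseg; apply: (le0_of_small_steps (B := \sum_i w i ^+ 2)).
  by apply: sumr_ge0 => i _; apply: sqr_ge0.
by move=> e /Cseg /pmin; rewrite sqdist_step; lra.
Qed.

Lemma in_K_shift_segment bb p w (e : R) : 0 <= e <= 1 ->
  in_K_shift bb p -> in_K_shift bb (fun i => p i + w i) ->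
  in_K_shift bb (fun i => p i + e * w i).
Proof.
move=> /andP[e0 e1] Kp Kpw i j ij; have /= Kij := Kp i j ij; have /= Kwij := Kpw i j ij.
have : 0 <= (1 - e) * (p j + bb j - (p i + bb i)) by apply: mulr_ge0; lra.
have : 0 <= e * (p j + w j + bb j - (p i + w i + bb i)) by apply: mulr_ge0; lra.
nra.
Qed.

Lemma proj_K_dir_le0 bb x p w : is_proj (in_K_shift bb) x p ->
  in_K_shift bb (fun i => p i + w i) -> \sum_i (x i - p i) * w i <= 0.
Proof.
move=> Pp Kpw; apply: (is_proj_dir_le0 Pp) => e /andP[e0 e1].
by apply: in_K_shift_segment Pp.1 Kpw; rewrite ltW.
Qed.

Lemma in_K_shift_add bb p w : in_K_shift bb p -> in_K w ->
  in_K_shift bb (fun i => p i + w i).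
Proof. by move=> Kp Kw i j ij; have := Kp i j ij; have := Kw i j ij => /=; lra. Qed.

(* [s] is the least gap between [yy] and the entries below it, so lowering
   the entries at or above [yy] by [s] keeps the vector sorted. *)
Lemma in_K_shift_sub_upper_step bb p (yy : R) : in_K_shift bb p ->
  exists2 s, 0 < s &
    in_K_shift bb (fun i => p i + - (s * (if yy <= bb i + p i then 1 else 0))).
Proof.
move=> Kp; set s := \big[Order.min/1]_(k | p k + bb k < yy) (yy - (p k + bb k)).
exists s.
  apply: (big_ind (fun v => 0 < v)) => // [u v u0 v0|k]; first by rewrite lt_min u0 v0.
  by rewrite subr_gt0.
have s_le k : p k + bb k < yy -> s <= yy - (p k + bb k).
  by move=> hk; rewrite /s (bigD1 k) //= ge_min lexx.
move=> i j ij; have := Kp i j ij => /= Kij.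
case: (lerP yy (bb i + p i)) => ci; case: (lerP yy (bb j + p j)) => cj; try lra.
by have := s_le i; rewrite addrC => /(_ ci); lra.
Qed.

Lemma proj_quantile_grad_le0 alpha bb x p (yy : R) : in_K alpha ->
  is_proj (in_K_shift bb) x p ->
  \sum_i ((if yy <= bb i + p i then 1 else 0) - alpha i) * (p i - x i) <= 0.
Proof.
move=> Kalpha Pp; set cv := fun i => if yy <= bb i + p i then (1 : R) else 0.
have Salpha := proj_K_dir_le0 Pp (in_K_shift_add Pp.1 Kalpha).
have [s s0 Ks] := in_K_shift_sub_upper_step yy Pp.1.
have := proj_K_dir_le0 Pp Ks.
have -> : \sum_i (x i - p i) * - (s * cv i) = - (s * \sum_i (x i - p i) * cv i).
  by rewrite mulr_sumr -sumrN; apply: eq_bigr => i _; ring.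
rewrite oppr_le0 pmulr_rge0 // => Scv.
have -> : \sum_i (cv i - alpha i) * (p i - x i)
          = \sum_i (x i - p i) * alpha i - \sum_i (x i - p i) * cv i.
  by rewrite -sumrB; apply: eq_bigr => i _; ring.
lra.
Qed.

End Projection.

Lemma sum_mul_prefix_sum (R : comPzRingType) (g : nat -> R) (T : nat) :
  2 * \sum_(1 <= t < T.+1) g t * \sum_(1 <= s < t) g s
  = (\sum_(1 <= t < T.+1) g t) ^+ 2 - \sum_(1 <= t < T.+1) g t ^+ 2.
Proof.
elim: T => [|T IH]; first by rewrite !big_geq // mulr0 expr2 mulr0 subrr.
by rewrite !(big_nat_recr T.+1) //= mulrDr IH; ring.
Qed.

Section UnitBoundedSequence.
Variables (R : realFieldType) (g : nat -> R).
Hypothesis g_le1 : forall s, `|g s| <= 1.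

Lemma norm_sum_nat_le (a b : nat) : `|\sum_(a <= s < b) g s| <= (b - a)%:R.
Proof.
apply: le_trans (ler_norm_sum _ _ _) _.
by rewrite -[leRHS]mulr1 -sumr_const_nat mulr1; apply: ler_sum => s _.
Qed.

Lemma sum_sqr_le (T : nat) : \sum_(1 <= t < T.+1) g t ^+ 2 <= T%:R.
Proof.
have -> : T%:R = \sum_(1 <= t < T.+1) (1 : R) by rewrite sumr_const_nat subn1.
by apply: ler_sum => t _; rewrite -real_normK ?num_real // expr_le1.
Qed.

Lemma delayed_prefix_gap_le (D t : nat) :
  g t * (\sum_(1 <= s < t) g s - \sum_(1 <= s < t - D) g s) <= D%:R.
Proof.
set X := _ - _.
have normX : `|X| <= D%:R.
  case: (leqP (t - D) 1) => tD.
    rewrite /X [X in _ - X]big_geq // subr0.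
    by apply: le_trans (norm_sum_nat_le 1 t) _; rewrite ler_nat; lia.
  rewrite /X (big_cat_nat (n := t - D)) /= ?leq_subr 1?ltnW //.
  rewrite addrAC subrr add0r.
  by apply: le_trans (norm_sum_nat_le (t - D) t) _; rewrite ler_nat; lia.
apply: le_trans (ler_norm _) _; rewrite normrM -[leRHS]mul1r.
exact: ler_pM.
Qed.

Lemma lazy_linear_regret_le (eta c : R) (T : nat) : 0 < eta ->
  \sum_(1 <= t < T.+1) g t * (- eta * \sum_(1 <= s < t) g s - c)
  <= c ^+ 2 / (2 * eta) + eta * T%:R / 2.
Proof.
move=> eta0.
set P := \sum_(1 <= t < T.+1) g t; set Q := \sum_(1 <= t < T.+1) g t ^+ 2.
have -> : \sum_(1 <= t < T.+1) g t * (- eta * \sum_(1 <= s < t) g s - c)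
          = - eta * \sum_(1 <= t < T.+1) g t * \sum_(1 <= s < t) g s - c * P.
  by rewrite /P !mulr_sumr -sumrB; apply: eq_bigr => t _; ring.
have -> : \sum_(1 <= t < T.+1) g t * \sum_(1 <= s < t) g s = (P ^+ 2 - Q) / 2.
  by rewrite -sum_mul_prefix_sum; field.
have square : (eta * P + c) ^+ 2 / (2 * eta)
              = c ^+ 2 / (2 * eta) + eta * P ^+ 2 / 2 + c * P.
  by field; rewrite gt_eqF.
have : 0 <= (eta * P + c) ^+ 2 / (2 * eta) by rewrite divr_ge0 ?sqr_ge0 ?ltW ?mulr_gt0.
have : eta * Q <= eta * T%:R by rewrite ler_pM2l ?sum_sqr_le.
lra.
Qed.

Lemma delayed_lazy_linear_regret_le (eta c : R) (D T : nat) : 0 < eta ->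
  \sum_(1 <= t < T.+1) g t * (- eta * \sum_(1 <= s < t - D) g s - c)
  <= c ^+ 2 / (2 * eta) + eta * T%:R / 2 + eta * (D * T)%:R.
Proof.
move=> eta0; have := lazy_linear_regret_le c T eta0.
have gaps : \sum_(1 <= t < T.+1)
              g t * (\sum_(1 <= s < t) g s - \sum_(1 <= s < t - D) g s) <= (D * T)%:R.
  have -> : (D * T)%:R = \sum_(1 <= t < T.+1) (D%:R : R).
    by rewrite sumr_const_nat subn1 natrM mulr_natr.
  by apply: ler_sum => t _; apply: delayed_prefix_gap_le.
have := ler_wpM2l (ltW eta0) gaps; rewrite mulr_sumr.
have -> : \sum_(1 <= t < T.+1) g t * (- eta * \sum_(1 <= s < t - D) g s - c)
  = \sum_(1 <= t < T.+1) g t * (- eta * \sum_(1 <= s < t) g s - c)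
    + \sum_(1 <= t < T.+1) eta * (g t * (\sum_(1 <= s < t) g s - \sum_(1 <= s < t - D) g s)).
  by rewrite -big_split; apply: eq_bigr => t _ /=; ring.
lra.
Qed.

End UnitBoundedSequence.

Section MultiQTRegret.
Variables (R : rcfType) (m : nat) (alpha : 'I_m -> R) (b : nat -> 'I_m -> R).
Variables (y : nat -> R) (Rb : R) (D : nat) (eta : R).
Variables (thetat theta : nat -> 'I_m -> R).
Hypothesis alpha_K : in_K alpha.
Hypothesis alpha01 : forall i, 0 <= alpha i <= 1.
Hypothesis y_near_b : forall t, (1 <= t)%N -> forall i, `|y t - b t i| <= Rb.
Hypothesis eta_gt0 : 0 < eta.
Hypothesis MQ : multiQT alpha b y D eta thetat theta.

Lemma multiQT_lazy t : (1 <= t)%N -> forall i,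
  thetat t i = - eta * \sum_(1 <= s < t - D) (cov y b theta s i - alpha i).
Proof.
have [thetat1 [_ [frozen step]]] := MQ.
elim: t => [//|t IH] _ i; have [->|t0] := posnP t.
  by rewrite thetat1 big_geq ?mulr0 // leq_subr.
have [tD|Dt] := leqP t D; first by rewrite frozen // IH // !big_geq //; lia.
rewrite step // IH // subSn 1?ltnW // big_nat_recr /=; last lia.
ring.
Qed.

Lemma norm_cov_sub_le1 t i : `|cov y b theta t i - alpha i| <= 1.
Proof.
have /andP[a0 a1] := alpha01 i.
by rewrite /cov ler_norml; case: ifP => _; apply/andP; split; lra.
Qed.

Lemma multiQT_step_regret_le (th : 'I_m -> R) t : (1 <= t)%N ->
  rhoA alpha (fun i => b t i + theta t i) (y t) - rhoA alpha (fun i => b t i + th i) (y t)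
  <= \sum_i (cov y b theta t i - alpha i) * (thetat t i - clip Rb (th i)).
Proof.
move=> t1; rewrite /rhoA -sumrB.
have proj_le0 := proj_quantile_grad_le0 (y t) alpha_K (MQ.2.1 t t1).
apply: le_trans (_ : _ <= \sum_i (cov y b theta t i - alpha i) * (theta t i - thetat t i)
                        + \sum_i (cov y b theta t i - alpha i) * (thetat t i - clip Rb (th i))) _.
  rewrite -big_split; apply: ler_sum => i _ /=; rewrite -mulrDr addrA subrK.
  have := rho_clip_le (th i) (alpha01 i) (y_near_b t1 i).
  have := rho_subgrad (b t i + theta t i) (b t i + clip Rb (th i)) (y t) (alpha01 i).
  rewrite opprD addrACA subrr add0r => subgrad clip_le.
  by apply: le_trans subgrad; rewrite lerD2l lerN2.
by move: proj_le0; rewrite /cov; lra.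
Qed.

Lemma multiQT_cumulative_regret_le (th : 'I_m -> R) (T : nat) :
  \sum_(1 <= t < T.+1) rhoA alpha (fun i => b t i + theta t i) (y t)
  - \sum_(1 <= t < T.+1) rhoA alpha (fun i => b t i + th i) (y t)
  <= (Rb ^+ 2 / (2 * eta) + eta * T%:R / 2 + eta * (D * T)%:R) *+ m.
Proof.
rewrite -sumrB; apply: le_trans (_ : _ <= \sum_(1 <= t < T.+1) \sum_i
    (cov y b theta t i - alpha i) *
    (- eta * \sum_(1 <= s < t - D) (cov y b theta s i - alpha i) - clip Rb (th i))) _.
  apply: ler_sum_nat => t /andP[t1 _]; apply: le_trans (multiQT_step_regret_le th t1) _.
  by under eq_bigr => i _ do rewrite (multiQT_lazy t1).
rewrite exchange_big /= -[m in leRHS]card_ord -sumr_const; apply: ler_sum => i _.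
apply: le_trans (delayed_lazy_linear_regret_le (norm_cov_sub_le1 ^~ i) _ _ _ eta_gt0) _.
rewrite !lerD2r ler_pM2r ?invr_gt0 ?mulr_gt0 //.
have Rb0 : 0 <= Rb := le_trans (normr_ge0 _) (y_near_b (ltn0Sn 0) i).
by rewrite -real_normK ?num_real // ler_sqr ?nnegrE ?norm_clip_le.
Qed.

Lemma multiQT_regret_le (th : 'I_m -> R) (T : nat) : (0 < T)%N ->
  regret alpha b y T theta th
  <= Rb ^+ 2 * m%:R / (2 * eta * T%:R) + 2 * eta * m%:R * (D.+1)%:R.
Proof.
move=> T0; have T0' : 0 < T%:R :> R by rewrite ltr0n.
rewrite /regret -mulrBr; apply: le_trans (_ : _ <= T%:R^-1 *
    ((Rb ^+ 2 / (2 * eta) + eta * T%:R / 2 + eta * (D * T)%:R) *+ m)) _.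
  by rewrite ler_pM2l ?invr_gt0 // multiQT_cumulative_regret_le.
have -> : T%:R^-1 * ((Rb ^+ 2 / (2 * eta) + eta * T%:R / 2 + eta * (D * T)%:R) *+ m)
          = Rb ^+ 2 * m%:R / (2 * eta * T%:R) + eta * m%:R / 2 + eta * m%:R * D%:R.
  by rewrite -mulr_natr natrM; field; rewrite ?gt_eqF.
have etam0 : 0 <= eta * m%:R by rewrite mulr_ge0 // ltW.
have : 0 <= eta * m%:R * D%:R by rewrite mulr_ge0.
by rewrite -[(D.+1)%:R]natr1; nra.
Qed.

End MultiQTRegret.

Lemma regret_bound_at_tuned_eta (R : rcfType) (Rb eta : R) (m D T : nat) :
  (0 < T)%N -> 0 < eta -> eta = Rb / 2 * Num.sqrt (((D.+1)%:R * T%:R)^-1) ->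
  Rb ^+ 2 * m%:R / (2 * eta * T%:R) + 2 * eta * m%:R * (D.+1)%:R
  = 2 * Rb * m%:R * Num.sqrt (D.+1)%:R / Num.sqrt T%:R.
Proof.
move=> T0 eta0 tuned.
rewrite sqrtrV ?mulr_ge0 // sqrtrM // in tuned.
have Rb0 : Rb != 0 by apply: contraTneq eta0 => Rb0; rewrite tuned Rb0 !mul0r ltxx.
have sD0 : 0 < Num.sqrt (D.+1)%:R :> R by rewrite sqrtr_gt0.
have sT0 : 0 < Num.sqrt T%:R :> R by rewrite sqrtr_gt0 ltr0n.
have /esym DE : Num.sqrt (D.+1)%:R ^+ 2 = (D.+1)%:R :> R by rewrite sqr_sqrtr.
have /esym TE : Num.sqrt T%:R ^+ 2 = T%:R :> R by rewrite sqr_sqrtr.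
move: tuned sD0 sT0 DE TE; set sD := Num.sqrt _; set sT := Num.sqrt _.
by move=> -> sD0 sT0 -> ->; field; rewrite Rb0 !gt_eqF.
Qed.

Theorem proposition9 (R : rcfType) (m : nat) (alpha : 'I_m -> R)
  (b : nat -> 'I_m -> R) (y : nat -> R) (Rb : R) (D T : nat) (eta : R)
  (thetat theta : nat -> 'I_m -> R) :
  (forall i j : 'I_m, (i < j)%N -> alpha i < alpha j) ->
  (forall i, 0 < alpha i < 1) ->
  (forall t, (1 <= t)%N -> in_K (b t)) ->
  (forall t, (1 <= t)%N -> forall i, `|y t - b t i| <= Rb) ->
  (0 < T)%N ->
  0 < eta ->
  multiQT alpha b y D eta thetat theta ->
  (forall th : 'I_m -> R,
     (forall t, (1 <= t <= T + D + 1)%N -> in_K_shift (b t) th) ->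
     regret alpha b y T theta th
       <= Rb ^+ 2 * m%:R / (2 * eta * T%:R) + 2 * eta * m%:R * (D.+1)%:R)
  /\
  (eta = Rb / 2 * Num.sqrt (((D.+1)%:R * T%:R)^-1) ->
   forall th : 'I_m -> R,
     (forall t, (1 <= t <= T + D + 1)%N -> in_K_shift (b t) th) ->
     regret alpha b y T theta th
       <= 2 * Rb * m%:R * Num.sqrt (D.+1)%:R / Num.sqrt T%:R).
Proof.
move=> alpha_lt alpha01 _ y_near_b T0 eta0 MQ.
have alpha_K : in_K alpha.
  move=> i j; rewrite leq_eqVlt => /orP[/eqP/val_inj -> // | /alpha_lt/ltW //].
have alpha01' i : 0 <= alpha i <= 1 by have /andP[/ltW -> /ltW ->] := alpha01 i.
have regret_le th := multiQT_regret_le alpha_K alpha01' y_near_b eta0 MQ th T0.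
split=> [th _ | tuned th _]; first exact: regret_le.
by rewrite -(regret_bound_at_tuned_eta m T0 eta0 tuned); apply: regret_le.
Qed.
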